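(* In the setting described in the context, define $\varphi$ on metrics $d\in\mathcal{B}_2$ on $A$ by $\varphi(d)(x,y)=d(x,\cdot)+d(y,\cdot)-d(x,y)-d(\cdot,\cdot)+m$, and $\psi$ on $\Sigma_m$-proximities $\sigma$ on $A$ by $\psi(\sigma)(x,y)=\tfrac12(\sigma(x,x)+\sigma(y,y))-\sigma(x,y)$. Then $\psi(\varphi(d))=d$ for every metric $d$ on $A$ belonging to $\mathcal{B}_2$, and $\varphi(\psi(\sigma))=\sigma$ for every $\Sigma_m$-proximity $\sigma$ on $A$.
   Context: $A$ is a nonempty set (possibly infinite); $m\in\mathbb{R}$. A metric on $A$ is a function $d:A^2\to\mathbb{R}$ such that for all $x,y,z\in A$: $d(x,y)=0$ iff $x=y$, and $d(x,y)+d(x,z)-d(y,z)\ge0$. $\mathcal{B}_1$ is a set of functions $A\to\mathbb{R}$ forming a real linear space containing all constant functions, and $\mu:\mathcal{B}_1\to\mathbb{R}$ is a linear functional with $\mu(c)=c$ for every constant function $c$ and monotone: if $f,g\in\mathcal{B}_1$ and $f\ge g$ pointwise, then $\mu(f)\ge\mu(g)$. For $f:A^2\to\mathbb{R}$ such that $y\mapsto f(x,y)$ lies in $\mathcal{B}_1$ for every $x$, write $f(x,\cdot)=\mu(y\mapsto f(x,y))$. $\mathcal{B}_2$ is a set of functions $A^2\to\mathbb{R}$ forming a real linear space that contains all constant functions and all functions $(x,y)\mapsto h(x)$ and $(x,y)\mapsto h(y)$ with $h\in\mathcal{B}_1$, and such that for every $f\in\mathcal{B}_2$: $y\mapsto f(x,y)\in\mathcal{B}_1$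 for every $x$, $x\mapsto f(x,\cdot)\in\mathcal{B}_1$, and $x\mapsto f(x,x)\in\mathcal{B}_1$. For a symmetric $d\in\mathcal{B}_2$, $d(\cdot,\cdot)=\mu(x\mapsto d(x,\cdot))$. A function $\sigma\in\mathcal{B}_2$ is a $\Sigma_m$-proximity on $A$ if for all $x,y,z\in A$: (1) $\sigma(x,\cdot)=m$; (2) $\sigma(x,y)+\sigma(x,z)-\sigma(y,z)\le\sigma(x,x)$, with strict inequality whenever $z=y$ and $x\ne y$. *)

From Stdlib Require Import Reals.
Open Scope R_scope.

Section Setting.
Variable A : Type.

Definition B1_space (B1 : (A -> R) -> Prop) : Prop :=
  (forall c : R, B1 (fun _ => c)) /\
  (forall f g, B1 f -> B1 g -> B1 (fun x => f x + g x)) /\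
  (forall (c : R) f, B1 f -> B1 (fun x => c * f x)).

(* mu : B1 -> R linear, normalized on constants, monotone.
   mu is modelled as a total map whose values outside B1 are irrelevant. *)
Definition mean_on (B1 : (A -> R) -> Prop) (mu : (A -> R) -> R) : Prop :=
  (forall f g, B1 f -> B1 g -> mu (fun x => f x + g x) = mu f + mu g) /\
  (forall (c : R) f, B1 f -> mu (fun x => c * f x) = c * mu f) /\
  (forall c : R, mu (fun _ => c) = c) /\
  (forall f g, B1 f -> B1 g -> (forall x, f x >= g x) -> mu f >= mu g).

Definition avg1 (mu : (A -> R) -> R) (f : A -> A -> R) (x : A) : R :=
  mu (fun y => f x y).

Definition avg2 (mu : (A -> R) -> R) (f : A -> A -> R) : R :=
  mu (fun x => avg1 mu f x).

Definition B2_space (B1 : (A -> R) -> Prop) (mu : (A -> R) -> R)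
    (B2 : (A -> A -> R) -> Prop) : Prop :=
  (forall c : R, B2 (fun _ _ => c)) /\
  (forall f g, B2 f -> B2 g -> B2 (fun x y => f x y + g x y)) /\
  (forall (c : R) f, B2 f -> B2 (fun x y => c * f x y)) /\
  (forall h, B1 h -> B2 (fun x _ => h x) /\ B2 (fun _ y => h y)) /\
  (forall f, B2 f ->
     (forall x, B1 (fun y => f x y)) /\
     B1 (fun x => avg1 mu f x) /\
     B1 (fun x => f x x)).

Definition is_metric (d : A -> A -> R) : Prop :=
  (forall x y, d x y = 0 <-> x = y) /\
  (forall x y z, d x y + d x z - d y z >= 0).

Definition sigma_proximity (mu : (A -> R) -> R) (B2 : (A -> A -> R) -> Prop)
    (m : R) (s : A -> A -> R) : Prop :=
  B2 s /\
  (forall x, avg1 mu s x = m) /\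
  (forall x y z,
     s x y + s x z - s y z <= s x x /\
     (z = y -> x <> y -> s x y + s x z - s y z < s x x)).

Definition phi (mu : (A -> R) -> R) (m : R) (d : A -> A -> R) : A -> A -> R :=
  fun x y => avg1 mu d x + avg1 mu d y - d x y - avg2 mu d + m.

Definition psi (s : A -> A -> R) : A -> A -> R :=
  fun x y => (s x x + s y y) / 2 - s x y.

End Setting.

Arguments B1_space {A}.
Arguments mean_on {A}.
Arguments avg1 {A}.
Arguments avg2 {A}.
Arguments B2_space {A}.
Arguments is_metric {A}.
Arguments sigma_proximity {A}.
Arguments phi {A}.
Arguments psi {A}.

(* Both composites are computed pointwise.  psi (phi d) = d uses only d(x,x) = 0.
   For phi (psi s), linearity of mu and the normalisation s(x,.) = m give
   psi(s)(x,.) = (s(x,x) + t)/2 - m and psi(s)(.,.) = t - m, where t is the mean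
   of the diagonal x |-> s(x,x); substituting, everything but s(x,y) cancels. *)

From Stdlib Require Import Reals FunctionalExtensionality.
Open Scope R_scope.

Section Mean.
Variables (A : Type) (B1 : (A -> R) -> Prop) (mu : (A -> R) -> R).
Hypotheses (HB1 : B1_space B1) (Hmu : mean_on B1 mu).

Lemma mean_affine (a b : R) (f : A -> R) :
  B1 f -> mu (fun y => a + b * f y) = a + b * mu f.
Proof.
  destruct HB1 as [Hc [_ Hsc]]; destruct Hmu as [Madd [Msc [Mc _]]].
  intros Hf.
  rewrite (Madd (fun _ => a) (fun y => b * f y) (Hc a) (Hsc b f Hf)).
  now rewrite Mc, (Msc b f Hf).
Qed.

Lemma mean_affine2 (a b c : R) (f g : A -> R) :
  B1 f -> B1 g -> mu (fun y => a + b * f y + c * g y) = a + b * mu f + c * mu g.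
Proof.
  destruct HB1 as [Hc [Hadd Hsc]]; destruct Hmu as [Madd [Msc _]].
  intros Hf Hg.
  assert (Haf : B1 (fun y => a + b * f y)) by exact (Hadd _ _ (Hc a) (Hsc b f Hf)).
  rewrite (Madd (fun y => a + b * f y) (fun y => c * g y) Haf (Hsc c g Hg)).
  now rewrite mean_affine, (Msc c g Hg).
Qed.

End Mean.

Lemma psi_phi (A : Type) (mu : (A -> R) -> R) (m : R) (d : A -> A -> R) :
  (forall x, d x x = 0) -> psi (phi mu m d) = d.
Proof.
  intros Hd0.
  apply functional_extensionality; intro x.
  apply functional_extensionality; intro y.
  unfold psi, phi. rewrite !Hd0. field.
Qed.

Section PhiPsi.
Variables (A : Type) (B1 : (A -> R) -> Prop) (mu : (A -> R) -> R) (m : R).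
Hypotheses (HB1 : B1_space B1) (Hmu : mean_on B1 mu).
Variable s : A -> A -> R.
Hypotheses (Hrow : forall x, B1 (fun y => s x y)) (Hdiag : B1 (fun x => s x x))
  (Hnorm : forall x, avg1 mu s x = m).

Lemma avg1_psi (x : A) :
  avg1 mu (psi s) x = s x x / 2 + mu (fun y => s y y) / 2 - m.
Proof.
  unfold avg1, psi.
  replace (fun y => (s x x + s y y) / 2 - s x y)
    with (fun y => s x x / 2 + / 2 * s y y + (-1) * s x y)
    by (apply functional_extensionality; intro y; field).
  rewrite (mean_affine2 A B1 mu HB1 Hmu _ _ _ _ _ Hdiag (Hrow x)).
  change (mu (fun y => s x y)) with (avg1 mu s x).
  rewrite Hnorm. field.
Qed.

Lemma avg2_psi : avg2 mu (psi s) = mu (fun y => s y y) - m.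
Proof.
  unfold avg2.
  replace (fun x => avg1 mu (psi s) x)
    with (fun x => (mu (fun y => s y y) / 2 - m) + / 2 * s x x)
    by (apply functional_extensionality; intro x; rewrite avg1_psi; field).
  rewrite (mean_affine A B1 mu HB1 Hmu _ _ _ Hdiag). field.
Qed.

Lemma phi_psi : phi mu m (psi s) = s.
Proof.
  apply functional_extensionality; intro x.
  apply functional_extensionality; intro y.
  unfold phi. rewrite !avg1_psi, avg2_psi. unfold psi. field.
Qed.

End PhiPsi.

Theorem lemma1 (A : Type) (a0 : A) (m : R)
    (B1 : (A -> R) -> Prop) (mu : (A -> R) -> R) (B2 : (A -> A -> R) -> Prop)
    (HB1 : B1_space B1) (Hmu : mean_on B1 mu) (HB2 : B2_space B1 mu B2) :
  (forall d : A -> A -> R, B2 d -> is_metric d -> psi (phi mu m d) = d) /\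
  (forall s : A -> A -> R, sigma_proximity mu B2 m s -> phi mu m (psi s) = s).
Proof.
  split.
  - intros d _ [Hd _].
    apply psi_phi. intro x. now apply Hd.
  - intros s [Hs [Hnorm _]].
    destruct HB2 as [_ [_ [_ [_ HB2_sections]]]].
    destruct (HB2_sections s Hs) as [Hrow [_ Hdiag]].
    exact (phi_psi A B1 mu m HB1 Hmu s Hrow Hdiag Hnorm).
Qed.
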